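(* Let $[\mathbf v_1]\neq[\mathbf v_2]$ be points of $S^2/\pm1$. Choose one of the two simple (non-self-intersecting) geodesic segments in $S^2/\pm1$ from $[\mathbf v_1]$ to $[\mathbf v_2]$, lift it to a great-circle segment in $S^2$ (one of two lifts), and let $\mu\in S^3$ be the lifted rolling monodromy of rolling the moving sphere along this segment with radius ratio $\rho=3$. Then $\mu$ depends only on the ordered pair $([\mathbf v_1],[\mathbf v_2])$ and not on the choices made.
   Context: Identify $\mathbb R^3$ with $\mathrm{Im}(\mathbb H)$ and $S^3$ with unit quaternions. Rolling along a curve $\mathbf v(t)$ in $S^2$ with radius ratio $3$ is the curve $(\mathbf v(t),q(t))\in S^2\times S^3$ with $q(0)=1$, $4\dot{\mathbf v}=\boldsymbol\omega\times\mathbf v$ and $\boldsymbol\omega\cdot\mathbf v=0$, where $\boldsymbol\omega=2\dot q\bar q$; the lifted rolling monodromy is the final value of $q$. *)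

From Stdlib Require Import Reals.
From Coquelicot Require Import Coquelicot.
Open Scope R_scope.

(** Quaternions H = R^4 ; R^3 is identified with Im(H) (real part 0). *)
Record quat := Quat { qr : R; qi : R; qj : R; qk : R }.

Definition qone : quat := Quat 1 0 0 0.
Definition qadd (p q : quat) : quat :=
  Quat (qr p + qr q) (qi p + qi q) (qj p + qj q) (qk p + qk q).
Definition qscal (c : R) (p : quat) : quat :=
  Quat (c * qr p) (c * qi p) (c * qj p) (c * qk p).
Definition qopp (p : quat) : quat := qscal (-1) p.
Definition qconj (p : quat) : quat := Quat (qr p) (- qi p) (- qj p) (- qk p).
Definition qmul (p q : quat) : quat :=
  Quat (qr p * qr q - qi p * qi q - qj p * qj q - qk p * qk q)
       (qr p * qi q + qi p * qr q + qj p * qk q - qk p * qj q)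
       (qr p * qj q - qi p * qk q + qj p * qr q + qk p * qi q)
       (qr p * qk q + qi p * qj q - qj p * qi q + qk p * qr q).
Definition qnorm2 (p : quat) : R := qr p ^ 2 + qi p ^ 2 + qj p ^ 2 + qk p ^ 2.

Definition is_im (p : quat) : Prop := qr p = 0.
Definition dot3 (p q : quat) : R := qi p * qi q + qj p * qj q + qk p * qk q.
Definition cross3 (p q : quat) : quat :=
  Quat 0 (qj p * qk q - qk p * qj q)
         (qk p * qi q - qi p * qk q)
         (qi p * qj q - qj p * qi q).

Definition on_S2 (v : quat) : Prop := is_im v /\ dot3 v v = 1.
Definition on_S3 (q : quat) : Prop := qnorm2 q = 1.

(** Equality of classes in S^2/±1. *)
Definition proj_eq (v w : quat) : Prop := v = w \/ v = qopp w.

Definition qderive (f : R -> quat) (t : R) (df : quat) : Prop :=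
  is_derive (fun s => qr (f s)) t (qr df) /\ is_derive (fun s => qi (f s)) t (qi df) /\
  is_derive (fun s => qj (f s)) t (qj df) /\ is_derive (fun s => qk (f s)) t (qk df).

Definition rcont_on (f : R -> R) (T : R) : Prop :=
  forall t, 0 <= t <= T ->
    filterlim f (within (fun s => 0 <= s <= T) (locally t)) (locally (f t)).
Definition qcont_on (f : R -> quat) (T : R) : Prop :=
  rcont_on (fun s => qr (f s)) T /\ rcont_on (fun s => qi (f s)) T /\
  rcont_on (fun s => qj (f s)) T /\ rcont_on (fun s => qk (f s)) T.

(** Rolling along the curve v : [0,T] -> S^2 with radius ratio 3:
    a curve (v(t),q(t)) in S^2 x S^3, continuous on [0,T], differentiable on
    (0,T), with q(0) = 1, and, writing omega = 2 q' conj(q) (which lies in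
    Im(H) = R^3), 4 v' = omega x v and omega . v = 0. *)
Definition rolling3 (v q : R -> quat) (T : R) : Prop :=
  q 0 = qone /\
  (forall t, 0 <= t <= T -> on_S2 (v t) /\ on_S3 (q t)) /\
  qcont_on v T /\ qcont_on q T /\
  (forall t, 0 < t < T ->
     exists dv dq : quat,
       qderive v t dv /\ qderive q t dq /\
       let omega := qscal 2 (qmul dq (qconj (q t))) in
       is_im omega /\
       qscal 4 dv = cross3 omega (v t) /\
       dot3 omega (v t) = 0).

Definition rolling_monodromy3 (v q : R -> quat) (T : R) (mu : quat) : Prop :=
  rolling3 v q T /\ q T = mu.

Definition great_circle (a b : quat) (c : R) : R -> quat :=
  fun t => qadd (qscal (cos (c * t)) a) (qscal (sin (c * t)) b).

(** The curve t |-> great_circle a b c t, t in [0,T], is the lift of a simple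
    (non-self-intersecting) geodesic segment of S^2/±1 from [v1] to [v2]. *)
Definition lifted_simple_segment (v1 v2 a b : quat) (c T : R) : Prop :=
  on_S2 a /\ on_S2 b /\ dot3 a b = 0 /\ 0 < c /\ 0 < T /\
  proj_eq (great_circle a b c 0) v1 /\
  proj_eq (great_circle a b c T) v2 /\
  (forall s t, 0 <= s <= T -> 0 <= t <= T ->
     proj_eq (great_circle a b c s) (great_circle a b c t) -> s = t).

From Stdlib Require Import Reals Lra Nsatz.
From Coquelicot Require Import Coquelicot.
Open Scope R_scope.

(* Along the great circle [v t = cos (c t) a + sin (c t) b] the rolling conditions
   force [omega = 4 v x v' = 4 c n] with [n = a x b], so [q' = 2 c n q] and the
   monodromy is [exp (2 c T n)].  Writing [x = v 0] and [w = v T], one has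
   [w x = - exp (c T n)], hence the monodromy is [(w x)^2], which does not change
   when [x] or [w] changes sign: it depends only on the classes [[x]] and [[w]]. *)

Definition qzero : quat := Quat 0 0 0 0.

(* [exp (x n) = cos x + sin x n] for unit imaginary [n]; the real part of [n] is ignored. *)
Definition qexp (n : quat) (x : R) : quat :=
  Quat (cos x) (sin x * qi n) (sin x * qj n) (sin x * qk n).

Lemma qmul_1_l (p : quat) : qmul qone p = p.
Proof. destruct p; unfold qmul, qone; cbn; f_equal; ring. Qed.

Lemma qmul_1_r (p : quat) : qmul p qone = p.
Proof. destruct p; unfold qmul, qone; cbn; f_equal; ring. Qed.

Lemma qmul_assoc (p q r : quat) : qmul p (qmul q r) = qmul (qmul p q) r.
Proof. destruct p, q, r; unfold qmul; simpl; f_equal; ring. Qed.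

Lemma qmul_conj_unit_r (p q : quat) : on_S3 q -> qmul (qmul p (qconj q)) q = p.
Proof.
  unfold on_S3, qnorm2; intros Hq; destruct p as [p0 p1 p2 p3], q as [q0 q1 q2 q3].
  unfold qmul, qconj; cbn [qr qi qj qk] in *; f_equal;
    [ transitivity (p0 * (q0 ^ 2 + q1 ^ 2 + q2 ^ 2 + q3 ^ 2))
    | transitivity (p1 * (q0 ^ 2 + q1 ^ 2 + q2 ^ 2 + q3 ^ 2))
    | transitivity (p2 * (q0 ^ 2 + q1 ^ 2 + q2 ^ 2 + q3 ^ 2))
    | transitivity (p3 * (q0 ^ 2 + q1 ^ 2 + q2 ^ 2 + q3 ^ 2)) ];
    try ring; rewrite Hq; ring.
Qed.

Lemma cross3_orthonormal (a b : quat) :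
  on_S2 a -> on_S2 b -> dot3 a b = 0 -> on_S2 (cross3 a b).
Proof.
  intros [_ Ha] [_ Hb] Hab; split; [reflexivity|].
  transitivity (dot3 a a * dot3 b b - dot3 a b ^ 2).
  - destruct a, b; unfold dot3, cross3; simpl; ring.
  - rewrite Ha, Hb, Hab; ring.
Qed.

Lemma qexp_0 (n : quat) : qexp n 0 = qone.
Proof. unfold qexp, qone; rewrite cos_0, sin_0; f_equal; ring. Qed.

Lemma qexp_mul_opp (n : quat) (x : R) : on_S2 n -> qmul (qexp n x) (qexp n (- x)) = qone.
Proof.
  intros [_ Hn]; unfold qexp, qmul, qone, dot3 in *; simpl.
  rewrite cos_neg, sin_neg.
  pose proof (sin2_cos2 x) as Hx; unfold Rsqr in Hx.
  f_equal; try ring.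
  transitivity (cos x * cos x + sin x * sin x * (qi n * qi n + qj n * qj n + qk n * qk n)).
  - ring.
  - rewrite Hn; lra.
Qed.

Lemma qexp_derive (n : quat) (k t : R) : on_S2 n ->
  qderive (fun s => qexp n (k * s)) t (qscal k (qmul n (qexp n (k * t)))).
Proof.
  intros [Hre Hn]; destruct n as [n0 n1 n2 n3]; unfold is_im, dot3 in *; simpl in *; subst n0.
  unfold qderive, qexp, qscal, qmul; simpl.
  split; [|split; [|split]]; auto_derive; auto.
  - transitivity (- k * sin (k * t) * (n1 * n1 + n2 * n2 + n3 * n3)); [rewrite Hn|]; ring.
  - ring.
  - ring.
  - ring.
Qed.

Definition qcontinuous (f : R -> quat) (t : R) : Prop :=
  continuous (fun s => qr (f s)) t /\ continuous (fun s => qi (f s)) t /\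
  continuous (fun s => qj (f s)) t /\ continuous (fun s => qk (f s)) t.

Lemma qderive_unique (f : R -> quat) (t : R) (df df' : quat) :
  qderive f t df -> qderive f t df' -> df = df'.
Proof.
  intros (D0 & D1 & D2 & D3) (D0' & D1' & D2' & D3').
  destruct df as [x0 x1 x2 x3], df' as [y0 y1 y2 y3]; cbn [qr qi qj qk] in *; f_equal;
    (eapply eq_trans; [symmetry|]; eapply is_derive_unique; eassumption).
Qed.

Lemma qderive_const (p : quat) (t : R) : qderive (fun _ => p) t qzero.
Proof. split; [|split; [|split]]; apply (is_derive_const (V := R_NormedModule)). Qed.

Lemma qderive_mul (f g : R -> quat) (t : R) (df dg : quat) :
  qderive f t df -> qderive g t dg ->
  qderive (fun s => qmul (f s) (g s)) t (qadd (qmul df (g t)) (qmul (f t) dg)).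
Proof.
  intros (F0 & F1 & F2 & F3) (G0 & G1 & G2 & G3).
  unfold qderive, qmul, qadd; cbn [qr qi qj qk].
  split; [|split; [|split]];
  match goal with |- is_derive ?h _ ?l =>
    cut (exists l', is_derive h t l' /\ l' = l); [intros (l' & Hd & <-); exact Hd|]
  end;
  (eexists; split;
  [ repeat match goal with
    | |- is_derive (fun s => _ + _) _ _ => apply (is_derive_plus (V := R_NormedModule))
    | |- is_derive (fun s => _ - _) _ _ => apply (is_derive_minus (V := R_NormedModule))
    | |- is_derive (fun s => _ * _) _ _ =>
        apply (is_derive_mult (K := R_AbsRing)); [| |exact Rmult_comm]
    | H : is_derive ?h t _ |- is_derive ?h t _ => exact H
    end
  | unfold minus, plus, opp, mult; simpl; ring ]).
Qed.

Lemma qderive_continuous (f : R -> quat) (t : R) (df : quat) :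
  qderive f t df -> qcontinuous f t.
Proof.
  intros (D0 & D1 & D2 & D3).
  split; [|split; [|split]];
    apply (ex_derive_continuous (K := R_AbsRing) (V := R_NormedModule)); eexists; eassumption.
Qed.

Lemma is_derive_0_eq (f : R -> R) (a b s t : R) :
  (forall x, a < x < b -> is_derive f x 0) -> a < s < b -> a < t < b -> f s = f t.
Proof.
  intros Hd Hs Ht.
  assert (Hle : forall x y, a < x < b -> a < y < b -> x < y -> f x = f y).
  { intros x y Hx Hy Hxy; apply (eq_is_derive f x y); [|exact Hxy].
    intros z Hz; apply Hd; lra. }
  destruct (Rtotal_order s t) as [H|[H|H]].
  - now apply Hle.
  - now subst.
  - symmetry; now apply Hle.
Qed.

Lemma qderive_0_eq (f : R -> quat) (a b s t : R) :
  (forall x, a < x < b -> qderive f x qzero) -> a < s < b -> a < t < b -> f s = f t.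
Proof.
  intros Hd Hs Ht.
  assert (Hc : forall c : quat -> R,
            (forall x, qderive f x qzero -> is_derive (fun s => c (f s)) x 0) ->
            c (f s) = c (f t)).
  { intros c Hdc; apply (is_derive_0_eq (fun x => c (f x)) a b); trivial.
    intros x Hx; apply Hdc, Hd, Hx. }
  pose proof (Hc qr (fun x H => proj1 H)) as E0.
  pose proof (Hc qi (fun x H => proj1 (proj2 H))) as E1.
  pose proof (Hc qj (fun x H => proj1 (proj2 (proj2 H)))) as E2.
  pose proof (Hc qk (fun x H => proj2 (proj2 (proj2 H)))) as E3.
  destruct (f s), (f t); cbn in *; congruence.
Qed.

Lemma within_open_interval_proper (T t : R) :
  0 < T -> 0 <= t <= T -> ProperFilter' (within (fun s => 0 < s < T) (locally t)).
Proof.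
  intros HT Ht; constructor; [|apply within_filter, locally_filter].
  intros [eps Heps].
  (* a point of (0, T) near t, on the segment from t to the midpoint *)
  set (lam := Rmin 1 (eps / T)).
  assert (Hlam : 0 < lam <= 1 /\ lam * T <= eps).
  { assert (0 < eps / T) by (apply Rdiv_lt_0_compat; [apply cond_pos|exact HT]).
    unfold lam; split; [split; [apply Rmin_pos; lra|apply Rmin_l]|].
    apply (Rmult_le_reg_r (/ T)); [now apply Rinv_0_lt_compat|].
    rewrite Rmult_assoc, Rinv_r by lra; rewrite Rmult_1_r; apply Rmin_r. }
  apply (Heps (t + lam * (T / 2 - t))).
  - cbn; unfold AbsRing_ball, abs, minus, plus, opp; cbn.
    replace (t + lam * (T / 2 - t) + - t) with (lam * (T / 2 - t)) by ring.
    pose proof (cond_pos eps); apply Rabs_def1; nra.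
  - nra.
Qed.

Lemma rcont_on_eq_interior (f g : R -> R) (T t : R) :
  0 < T -> 0 <= t <= T -> rcont_on f T -> continuous g t ->
  (forall s, 0 < s < T -> f s = g s) -> f t = g t.
Proof.
  intros HT Ht Hf Hg Hfg.
  pose proof (within_open_interval_proper T t HT Ht) as Hproper.
  apply (filterlim_locally_unique f).
  - apply (filterlim_filter_le_1 (F := within (fun s => 0 <= s <= T) (locally t)) f);
      [|exact (Hf t Ht)].
    intros P HP; apply (filter_imp (F := locally t) (fun s => 0 <= s <= T -> P s)); [|exact HP].
    intros s HPs Hs; apply HPs; lra.
  - apply (filterlim_ext_loc g f).
    + apply (filter_forall (F := locally t)); intros s Hs; symmetry; now apply Hfg.
    + exact (filterlim_filter_le_1 g (filter_le_within (F := locally t) _) Hg).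
Qed.

Lemma qcont_on_eq_interior (f g : R -> quat) (T t : R) :
  0 < T -> 0 <= t <= T -> qcont_on f T -> qcontinuous g t ->
  (forall s, 0 < s < T -> f s = g s) -> f t = g t.
Proof.
  intros HT Ht (F0 & F1 & F2 & F3) (G0 & G1 & G2 & G3) Hfg.
  assert (Hc : forall c : quat -> R, rcont_on (fun s => c (f s)) T ->
            continuous (fun s => c (g s)) t -> c (f t) = c (g t)).
  { intros c Hf Hg; apply (rcont_on_eq_interior _ _ T t HT Ht Hf Hg).
    intros s Hs; now rewrite Hfg. }
  pose proof (Hc qr F0 G0); pose proof (Hc qi F1 G1).
  pose proof (Hc qj F2 G2); pose proof (Hc qk F3 G3).
  destruct (f t), (g t); cbn in *; congruence.
Qed.

Lemma qexp_ode_unique (n : quat) (k T : R) (q : R -> quat) :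
  on_S2 n -> 0 < T -> q 0 = qone -> qcont_on q T ->
  (forall t, 0 < t < T -> exists dq, qderive q t dq /\ dq = qscal k (qmul n (q t))) ->
  q T = qexp n (k * T).
Proof.
  intros Hn HT Hq0 Hcont Hode.
  set (G := fun s => qmul (qexp n (- k * s)) (q s)).
  assert (HG : forall t, 0 < t < T -> qderive G t qzero).
  { intros t Ht; destruct (Hode t Ht) as (dq & Hdq & ->).
    replace qzero with (qadd (qmul (qscal (- k) (qmul n (qexp n (- k * t)))) (q t))
                             (qmul (qexp n (- k * t)) (qscal k (qmul n (q t))))).
    - apply (qderive_mul (fun s => qexp n (- k * s)) q); [apply qexp_derive, Hn | exact Hdq].
    - (* [exp (-k t n)] commutes with [n] *)
      destruct n, (q t); unfold qadd, qmul, qscal, qexp, qzero; cbn; f_equal; ring. }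
  set (K := G (T / 2)).
  assert (Hinterior : forall s, 0 < s < T -> q s = qmul (qexp n (k * s)) K).
  { intros s Hs; unfold K.
    rewrite <- (qderive_0_eq G 0 T s (T / 2) HG Hs) by lra; unfold G.
    replace (- k * s) with (- (k * s)) by ring.
    now rewrite qmul_assoc, qexp_mul_opp, qmul_1_l. }
  assert (Hclosed : forall s, 0 <= s <= T -> q s = qmul (qexp n (k * s)) K).
  { intros s Hs; set (h := fun s => qmul (qexp n (k * s)) K).
    apply (qcont_on_eq_interior q h T s HT Hs Hcont); [|exact Hinterior].
    eapply qderive_continuous, (qderive_mul (fun s => qexp n (k * s)));
      [apply qexp_derive, Hn | apply qderive_const]. }
  assert (HK : K = qone).
  { rewrite <- Hq0, Hclosed by lra. now rewrite Rmult_0_r, qexp_0, qmul_1_l. }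
  now rewrite Hclosed, HK, qmul_1_r by lra.
Qed.

Lemma great_circle_derive (a b : quat) (c t : R) :
  qderive (great_circle a b c) t (qscal c (great_circle b (qopp a) c t)).
Proof.
  destruct a, b; unfold qderive, great_circle, qadd, qscal, qopp; cbn.
  split; [|split; [|split]]; auto_derive; auto; ring.
Qed.

Lemma cross3_great_circle_derive (a b : quat) (c t : R) :
  cross3 (great_circle a b c t) (qscal c (great_circle b (qopp a) c t)) = qscal c (cross3 a b).
Proof.
  pose proof (sin2_cos2 (c * t)) as Hsc; unfold Rsqr in Hsc.
  destruct a, b; unfold great_circle, cross3, qadd, qscal, qopp; cbn; f_equal; [ring|nsatz..].
Qed.

(* [v x (w x v) = w] for [w] orthogonal to the unit vector [v]. *)
Lemma rolling_omega (v dv w : quat) :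
  dot3 v v = 1 -> is_im w -> qscal 4 dv = cross3 w v -> dot3 w v = 0 ->
  w = qscal 4 (cross3 v dv).
Proof.
  intros Hv Hw Hrot Hperp.
  destruct v as [v0 v1 v2 v3], dv as [d0 d1 d2 d3], w as [w0 w1 w2 w3].
  unfold dot3, is_im, qscal, cross3 in *; cbn in *.
  injection Hrot as _ H1 H2 H3; f_equal; [lra|nsatz..].
Qed.

Lemma rolling3_great_circle_derive (a b : quat) (c T : R) (q : R -> quat) (t : R) :
  rolling3 (great_circle a b c) q T -> 0 < t < T ->
  exists dq, qderive q t dq /\ dq = qscal (2 * c) (qmul (cross3 a b) (q t)).
Proof.
  intros (_ & Hon & _ & _ & Hd) Ht.
  destruct (Hd t Ht) as (dv & dq & Hdv & Hdq & Him & Hrot & Hperp).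
  destruct (Hon t ltac:(lra)) as [[_ Hv] Hq].
  exists dq; split; [exact Hdq|].
  rewrite (qderive_unique _ _ _ _ Hdv (great_circle_derive a b c t)) in Hrot.
  pose proof (rolling_omega _ _ _ Hv Him Hrot Hperp) as Homega.
  rewrite cross3_great_circle_derive in Homega.
  assert (Hhalf : qmul dq (qconj (q t)) = qscal (2 * c) (cross3 a b)).
  { destruct (qmul dq (qconj (q t))), (cross3 a b); unfold qscal in *; cbn in *.
    injection Homega as H0 H1 H2 H3; f_equal; lra. }
  rewrite <- (qmul_conj_unit_r dq (q t) Hq), Hhalf.
  destruct (cross3 a b), (q t); unfold qscal, qmul; cbn; f_equal; ring.
Qed.

Lemma rolling3_great_circle_endpoint (a b : quat) (c T : R) (q : R -> quat) :
  on_S2 a -> on_S2 b -> dot3 a b = 0 -> 0 < T ->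
  rolling3 (great_circle a b c) q T -> q T = qexp (cross3 a b) (2 * c * T).
Proof.
  intros Ha Hb Hab HT Hroll.
  pose proof Hroll as (Hq0 & _ & _ & Hcont & _).
  apply qexp_ode_unique; [apply cross3_orthonormal; assumption | assumption.. |].
  intros t Ht; exact (rolling3_great_circle_derive a b c T q t Hroll Ht).
Qed.

Definition geodesic_monodromy (x w : quat) : quat := qmul (qmul w x) (qmul w x).

Lemma geodesic_monodromy_great_circle (a b : quat) (c T : R) :
  on_S2 a -> on_S2 b -> dot3 a b = 0 ->
  geodesic_monodromy (great_circle a b c 0) (great_circle a b c T) = qexp (cross3 a b) (2 * c * T).
Proof.
  intros [Ha0 Ha] [Hb0 Hb] Hab.
  destruct a as [a0 a1 a2 a3], b as [b0 b1 b2 b3]; unfold is_im, dot3 in *; cbn in *.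
  subst a0 b0.
  unfold geodesic_monodromy, great_circle, qexp, qmul, qadd, qscal, cross3; cbn.
  replace (c * 0) with 0 by ring; rewrite cos_0, sin_0.
  replace (2 * c * T) with (2 * (c * T)) by ring; rewrite cos_2a, sin_2a.
  f_equal; nsatz.
Qed.

Lemma geodesic_monodromy_proj_eq (x x' w w' : quat) :
  proj_eq x x' -> proj_eq w w' -> geodesic_monodromy x w = geodesic_monodromy x' w'.
Proof.
  intros [->| ->] [->| ->]; destruct x', w';
    unfold geodesic_monodromy, qopp, qscal, qmul; cbn; f_equal; ring.
Qed.

Lemma monodromy_lifted_segment (v1 v2 a b : quat) (c T : R) (q : R -> quat) (mu : quat) :
  lifted_simple_segment v1 v2 a b c T ->
  rolling_monodromy3 (great_circle a b c) q T mu ->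
  mu = geodesic_monodromy v1 v2.
Proof.
  intros (Ha & Hb & Hab & _ & HT & Hstart & Hend & _) (Hroll & <-).
  rewrite (rolling3_great_circle_endpoint a b c T q Ha Hb Hab HT Hroll).
  rewrite <- (geodesic_monodromy_great_circle a b c T Ha Hb Hab).
  now apply geodesic_monodromy_proj_eq.
Qed.

Theorem lemma5 :
  forall (v1 v2 : quat),
    on_S2 v1 -> on_S2 v2 -> ~ proj_eq v1 v2 ->
  forall (a b : quat) (c T : R) (q : R -> quat) (mu : quat)
         (a' b' : quat) (c' T' : R) (q' : R -> quat) (mu' : quat),
    lifted_simple_segment v1 v2 a b c T ->
    rolling_monodromy3 (great_circle a b c) q T mu ->
    lifted_simple_segment v1 v2 a' b' c' T' ->
    rolling_monodromy3 (great_circle a' b' c') q' T' mu' ->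
    mu = mu'.
Proof.
  intros v1 v2 _ _ _ a b c T q mu a' b' c' T' q' mu' Hseg Hmono Hseg' Hmono'.
  now rewrite (monodromy_lifted_segment _ _ _ _ _ _ _ _ Hseg Hmono),
              (monodromy_lifted_segment _ _ _ _ _ _ _ _ Hseg' Hmono').
Qed.
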